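(* Let $\mathcal{X}$ be the set of order types of linear orders that embed into $U$. Then $\mathcal{X}$ is closed under $\cdot_\omega$ and $\cdot_\omega$ is associative on $\mathcal{X}$; i.e. $\langle\mathcal{X},\cdot_\omega\rangle$ is a semigroup.
   Context: The countable condensation $\sim_\omega$ on a linear order $L$: $x\sim_\omega y$ iff the closed interval between $x$ and $y$ is countable; $L/\!\sim_\omega$ is the linear order of its classes. $ML$ denotes the lexicographic product (each element of $M$ replaced by a copy of $L$). $M\cdot_\omega L$ is the order type of $ML/\!\sim_\omega$. $U$ is the linear order $R^*+\mathbb{Q}+R$, where $R$ is obtained from $\omega_1$ by replacing each $\alpha<\omega_1$ with a point $u_\alpha$ followed by a copy of the rationals, $R^*$ is the reverse of $R$, and the middle summand is a copy of the rationals. *)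

From mathcomp Require Import all_boot all_order all_algebra.
Import Order.TTheory GRing.Theory Num.Theory.

Definition linear {T : Type} (r : T -> T -> Prop) : Prop :=
  (forall x, ~ r x x) /\
  (forall x y z, r x y -> r y z -> r x z) /\
  (forall x y, r x y \/ x = y \/ r y x).

Definition le_of {T : Type} (r : T -> T -> Prop) (x y : T) : Prop := r x y \/ x = y.

Definition countable_set {T : Type} (P : T -> Prop) : Prop :=
  exists f : T -> nat, forall a b, P a -> P b -> f a = f b -> a = b.

Definition closed_between {T : Type} (r : T -> T -> Prop) (x y : T) : T -> Prop :=
  fun z => (le_of r x z /\ le_of r z y) \/ (le_of r y z /\ le_of r z x).

Definition csim {T : Type} (r : T -> T -> Prop) (x y : T) : Prop :=
  countable_set (closed_between r x y).

(** Carrier of L / ~_omega: the equivalence classes (as predicates). *)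
Definition cond_car {T : Type} (r : T -> T -> Prop) : Type :=
  { C : T -> Prop | exists x, C = csim r x }.

Definition cond_lt {T : Type} (r : T -> T -> Prop) (C D : cond_car r) : Prop :=
  exists x y, proj1_sig C x /\ proj1_sig D y /\ r x y /\ ~ csim r x y.

(** Lexicographic product ML: each point of M replaced by a copy of L. *)
Definition lex_lt {M L : Type} (rM : M -> M -> Prop) (rL : L -> L -> Prop)
  (p q : M * L) : Prop :=
  rM p.1 q.1 \/ (p.1 = q.1 /\ rL p.2 q.2).

Definition sum_lt {A B : Type} (rA : A -> A -> Prop) (rB : B -> B -> Prop)
  (p q : A + B) : Prop :=
  match p, q with
  | inl a, inl a' => rA a a'
  | inr b, inr b' => rB b b'
  | inl _, inr _ => True
  | inr _, inl _ => False
  end.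

Definition rev_lt {T : Type} (r : T -> T -> Prop) (x y : T) : Prop := r y x.

Definition embeds {S T : Type} (rS : S -> S -> Prop) (rT : T -> T -> Prop) : Prop :=
  exists f : S -> T, forall x y, rS x y <-> rT (f x) (f y).

Definition order_iso {S T : Type} (rS : S -> S -> Prop) (rT : T -> T -> Prop) : Prop :=
  exists f : S -> T, (forall y, exists x, f x = y) /\
                     (forall x y, rS x y <-> rT (f x) (f y)).

(** (W, wlt) is (a copy of) omega_1: an uncountable well-order all of whose
    proper initial segments are countable. *)
Definition is_omega1 (W : Type) (wlt : W -> W -> Prop) : Prop :=
  linear wlt /\ well_founded wlt /\
  ~ countable_set (fun _ : W => True) /\
  (forall w, countable_set (fun v => wlt v w)).

Definition rat_lt (a b : rat) : Prop := (a < b)%R.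

(** 1 + Q: a point u (None) followed by a copy of the rationals. *)
Definition pointQ_lt (p q : option rat) : Prop :=
  match p, q with
  | None, Some _ => True
  | Some a, Some b => rat_lt a b
  | _, _ => False
  end.

(** R: omega_1 with each alpha replaced by u_alpha followed by a copy of Q. *)
Definition R_car (W : Type) : Type := (W * option rat)%type.
Definition R_lt {W : Type} (wlt : W -> W -> Prop) : R_car W -> R_car W -> Prop :=
  lex_lt wlt pointQ_lt.

(** U = R^* + Q + R. *)
Definition U_car (W : Type) : Type := (R_car W + (rat + R_car W))%type.
Definition U_lt {W : Type} (wlt : W -> W -> Prop) : U_car W -> U_car W -> Prop :=
  sum_lt (rev_lt (R_lt wlt)) (sum_lt rat_lt (R_lt wlt)).

(** M ._omega L is the order type of ML / ~_omega. *)
Definition comega_lt {M L : Type} (rM : M -> M -> Prop) (rL : L -> L -> Prop) :=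
  cond_lt (lex_lt rM rL).

(* Every order embeddable in U is locally countable (all of its closed intervals
   are countable): each interval of U consists of points whose omega_1-coordinate
   is at most some w, and there are only countably many such points.  For locally
   countable M and L, two points of ML are ~_omega-equivalent iff they lie in the
   same copy of L or L is countable, so M ._omega L is a one-point (or empty)
   order when L is countable and a copy of M otherwise.  Both closure and
   associativity follow from this description, the latter because M ._omega L is
   countable iff M or L is. *)
From mathcomp Require Import all_boot all_order all_algebra.
From Stdlib Require Import Classical ClassicalEpsilon ProofIrrelevance
  FunctionalExtensionality PropExtensionality.

Definition countable_type (X : Type) : Prop := countable_set (fun _ : X => True).

Lemma countable_inj_countType {T : Type} (X : countType) (e : T -> X) (P : T -> Prop) :
  (forall a b, P a -> P b -> e a = e b -> a = b) -> countable_set P.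
Proof.
move=> inj_e; exists (fun t => pickle (e t)) => a b Pa Pb E.
exact: inj_e (pcan_inj pickleK E).
Qed.

Lemma countable_preimage {X Y : Type} (g : X -> Y) {P : X -> Prop} {Q : Y -> Prop} :
  countable_set Q -> (forall x, P x -> Q (g x)) ->
  (forall a b, P a -> P b -> g a = g b -> a = b) -> countable_set P.
Proof.
move=> [f inj_f] PQ inj_g; exists (fun x => f (g x)) => a b Pa Pb E.
by apply: inj_g => //; apply: inj_f => //; apply: PQ.
Qed.

Lemma countable_sub {X : Type} {P Q : X -> Prop} :
  countable_set Q -> (forall x, P x -> Q x) -> countable_set P.
Proof. by move=> [f inj_f] PQ; exists f => a b Pa Pb; apply: inj_f; apply: PQ. Qed.

Lemma countable_union {X : Type} {P Q : X -> Prop} :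
  countable_set P -> countable_set Q -> countable_set (fun x => P x \/ Q x).
Proof.
move=> [f inj_f] [g inj_g].
apply: (countable_inj_countType _
  (fun x => if excluded_middle_informative (P x) then inl (f x) else inr (g x))).
move=> a b Ha Hb.
case: (excluded_middle_informative (P a)) => Pa;
case: (excluded_middle_informative (P b)) => Pb // [E].
- exact: inj_f.
- by apply: inj_g => //; [case: Ha | case: Hb].
Qed.

Lemma countable_prod {A B : Type} {P : A -> Prop} {Q : B -> Prop} :
  countable_set P -> countable_set Q ->
  countable_set (fun x : A * B => P x.1 /\ Q x.2).
Proof.
move=> [f inj_f] [g inj_g].
apply: (countable_inj_countType _ (fun x => (f x.1, g x.2))).
move=> [a1 a2] [b1 b2] /= [Pa Qa] [Pb Qb] [E1 E2].
by rewrite (inj_f _ _ Pa Pb E1) (inj_g _ _ Qa Qb E2).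
Qed.

Lemma countable_sum {A B : Type} {P : A -> Prop} {Q : B -> Prop} :
  countable_set P -> countable_set Q ->
  countable_set (fun s : A + B => match s with inl a => P a | inr b => Q b end).
Proof.
move=> [f inj_f] [g inj_g].
apply: (countable_inj_countType _
  (fun s => match s with inl a => inl (f a) | inr b => inr (g b) end)).
move=> [a|a] [b|b] //= Ha Hb [E].
- by rewrite (inj_f _ _ Ha Hb E).
- by rewrite (inj_g _ _ Ha Hb E).
Qed.

Lemma countable_countType (X : countType) (P : X -> Prop) : countable_set P.
Proof. exact: (@countable_inj_countType X X id). Qed.

Lemma countable_set1 {X : Type} (a : X) : countable_set (fun z => z = a).
Proof. by exists (fun _ => 0) => x y -> ->. Qed.

Lemma uncountable_inhabited {X : Type} : ~ countable_type X -> inhabited X.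
Proof.
move=> unc; apply: NNPP => empty; apply: unc.
by exists (fun _ => 0) => a; case: empty; constructor.
Qed.

Definition apart_lt {T : Type} (r : T -> T -> Prop) (x y : T) : Prop :=
  r x y /\ ~ csim r x y.

Section LinearOrder.
Context {T : Type} {r : T -> T -> Prop}.
Hypothesis lin : linear r.

Lemma le_of_trans {x y z} : le_of r x y -> le_of r y z -> le_of r x z.
Proof.
case: lin => _ [trans _] [Hxy|->] [Hyz|<-]; by [left; apply: trans Hyz | left | right].
Qed.

Lemma le_of_total x y : le_of r x y \/ le_of r y x.
Proof.
case: lin => _ [_ tot]; case: (tot x y) => [H|[->|H]].
- by left; left.
- by left; right.
- by right; left.
Qed.

Lemma le_of_lt_false {x y} : le_of r x y -> r y x -> False.
Proof.
case: lin => irr [trans _] [H|->] H'; [exact: irr _ (trans _ _ _ H H') | exact: irr _ H'].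
Qed.

Lemma le_of_anti {x y} : le_of r x y -> le_of r y x -> x = y.
Proof. by move=> H [H'|//]; case: (le_of_lt_false H H'). Qed.

Lemma closed_between_split {x y z w} :
  closed_between r x z w -> closed_between r x y w \/ closed_between r y z w.
Proof.
case=> -[H1 H2]; case: (le_of_total w y) => H3.
- by left; left.
- by right; left.
- by right; right.
- by left; right.
Qed.

Lemma closed_between_sym {x y w} : closed_between r x y w -> closed_between r y x w.
Proof. by case=> H; [right|left]. Qed.

Lemma closed_between_same {x w} : closed_between r x x w -> w = x.
Proof. by case=> -[H1 H2]; apply: le_of_anti. Qed.

Lemma csim_refl x : csim r x x.
Proof. exact: countable_sub (countable_set1 x) (@closed_between_same x). Qed.

Lemma csim_sym {x y} : csim r x y -> csim r y x.
Proof. by move=> Hxy; apply: countable_sub Hxy _ => w /closed_between_sym. Qed.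

Lemma csim_trans {x y z} : csim r x y -> csim r y z -> csim r x z.
Proof.
move=> Hxy Hyz; apply: countable_sub (countable_union Hxy Hyz) _.
by move=> w; apply: closed_between_split.
Qed.

Lemma csim_convex {c d e} : csim r c e -> le_of r c d -> le_of r d e -> csim r c d.
Proof.
move=> Hce Hcd Hde; apply: (countable_sub Hce) => w [[H1 H2]|[H1 H2]].
- by left; split; last apply: le_of_trans Hde.
- have Hce' := le_of_trans Hcd Hde.
  by left; split; [apply: le_of_trans H1 | apply: le_of_trans H2 Hce'].
Qed.

(* ~_omega-classes are convex, so two distinct classes cannot interleave. *)
Lemma apart_lt_csim {a b a' b'} :
  apart_lt r a b -> csim r a a' -> csim r b b' -> r a' b'.
Proof.
move=> [Hab Hn] Ha Hb.
case: lin => _ [_ tot]; case: (tot a' b') => [//|Hb'a']; case: Hn.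
have Hba : le_of r b' a' by case: Hb'a' => [->|H]; [right|left].
apply: (countable_sub (countable_union Ha (csim_sym Hb))) => w [[H1 H2]|[H1 H2]].
- case: (le_of_total w a') => H3; first by left; left.
  by right; left; split => //; apply: le_of_trans H3.
- by case: (le_of_lt_false (le_of_trans H1 H2) Hab).
Qed.

End LinearOrder.

Section Condensation.
Context {T : Type} {r : T -> T -> Prop}.
Hypothesis lin : linear r.

Definition cond_rep (C : cond_car r) : T :=
  proj1_sig (constructive_indefinite_description _ (proj2_sig C)).

Lemma cond_rep_spec (C : cond_car r) : proj1_sig C = csim r (cond_rep C).
Proof. exact: proj2_sig (constructive_indefinite_description _ (proj2_sig C)). Qed.

Definition cond_cls (t : T) : cond_car r := exist _ (csim r t) (ex_intro _ t erefl).

Lemma cond_rep_mem (C : cond_car r) : proj1_sig C (cond_rep C).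
Proof. by rewrite cond_rep_spec; apply: csim_refl. Qed.

Lemma cond_cls_mem t : proj1_sig (cond_cls t) t.
Proof. exact: csim_refl. Qed.

Lemma cond_mem_csim {C : cond_car r} {x y} : proj1_sig C x -> proj1_sig C y -> csim r x y.
Proof. by rewrite cond_rep_spec => Hx Hy; apply: (csim_trans lin (csim_sym Hx) Hy). Qed.

Lemma cond_eq {C D : cond_car r} {x y} :
  proj1_sig C x -> proj1_sig D y -> csim r x y -> C = D.
Proof.
case: C => P HP /= HPx; case: D => Q HQ /= HQy Hxy.
have EPQ : P = Q.
  case: HP HPx => a Ea; case: HQ HQy => b Eb; rewrite Ea Eb => Hb Ha.
  have Eab : csim r a b.
    exact: (csim_trans lin Ha (csim_trans lin Hxy (csim_sym Hb))).
  apply: functional_extensionality => z; apply: propositional_extensionality.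
  by split => H; [apply: (csim_trans lin (csim_sym Eab)) | apply: (csim_trans lin Eab)].
by subst Q; rewrite (proof_irrelevance _ HP HQ).
Qed.

Lemma cond_lt_apart {C D : cond_car r} {a b} :
  proj1_sig C a -> proj1_sig D b -> (cond_lt r C D <-> apart_lt r a b).
Proof.
move=> Ha Hb; split.
- move=> [x [y [Hx [Hy Hxy]]]].
  have Hxa := cond_mem_csim Hx Ha; have Hyb := cond_mem_csim Hy Hb.
  split; first exact: (apart_lt_csim lin Hxy Hxa Hyb).
  move=> Hab; apply: Hxy.2.
  exact: (csim_trans lin Hxa (csim_trans lin Hab (csim_sym Hyb))).
- by move=> Hab; exists a, b.
Qed.

Lemma cond_linear : linear (cond_lt r).
Proof.
have rep_apart C D : cond_lt r C D <-> apart_lt r (cond_rep C) (cond_rep D).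
  exact: cond_lt_apart (cond_rep_mem C) (cond_rep_mem D).
case: (lin) => irr [trans tot]; split; [|split].
- by move=> C /rep_apart [_]; apply; apply: csim_refl.
- move=> C D E /rep_apart [H1 N1] /rep_apart [H2 _]; apply/rep_apart; split.
    exact: trans H1 H2.
  by move=> H; apply: N1; apply: (csim_convex lin H (or_introl H1) (or_introl H2)).
- move=> C D; case: (classic (csim r (cond_rep C) (cond_rep D))) => Hc.
    by right; left; apply: cond_eq (cond_rep_mem C) (cond_rep_mem D) Hc.
  case: (tot (cond_rep C) (cond_rep D)) => [H|[E|H]].
  + by left; apply/rep_apart.
  + by case: Hc; rewrite E; apply: csim_refl.
  + by right; right; apply/rep_apart; split => // /csim_sym.
Qed.

End Condensation.

Lemma order_iso_cond {T1 T2 : Type} (r1 : T1 -> T1 -> Prop) (r2 : T2 -> T2 -> Prop)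
    (h : T1 -> T2) : linear r1 -> linear r2 ->
  (forall t2, exists t1, csim r2 (h t1) t2) ->
  (forall x y, apart_lt r1 x y <-> apart_lt r2 (h x) (h y)) ->
  order_iso (cond_lt r1) (cond_lt r2).
Proof.
move=> lin1 lin2 h_onto h_apart.
have h_csim a b : csim r1 a b -> csim r2 (h a) (h b).
  move=> Hab; apply: NNPP => Hn; case: (lin2) => _ [_ tot].
  case: (tot (h a) (h b)) => [H|[E|H]].
  - by case: (proj2 (h_apart a b) (conj H Hn)).
  - by apply: Hn; rewrite E; apply: (csim_refl lin2).
  - have Hn' : ~ csim r2 (h b) (h a) by move/csim_sym.
    by case: (proj2 (h_apart b a) (conj H Hn')) => _ []; apply: csim_sym.
exists (fun C => cond_cls (h (cond_rep C))); split.
- move=> D; case: (h_onto (cond_rep D)) => t1 Ht1; exists (cond_cls t1).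
  apply: (cond_eq lin2 (cond_cls_mem lin2 _) (cond_rep_mem lin2 D)).
  apply: (csim_trans lin2 _ Ht1); apply: h_csim.
  exact: (cond_mem_csim lin1 (cond_rep_mem lin1 _) (cond_cls_mem lin1 t1)).
- move=> C D; rewrite (cond_lt_apart lin1 (cond_rep_mem lin1 C) (cond_rep_mem lin1 D)).
  by rewrite (cond_lt_apart lin2 (cond_cls_mem lin2 _) (cond_cls_mem lin2 _)).
Qed.

Definition locally_countable {T : Type} (r : T -> T -> Prop) : Prop :=
  forall x y, csim r x y.

Lemma lex_linear {M L : Type} {rM : M -> M -> Prop} {rL : L -> L -> Prop} :
  linear rM -> linear rL -> linear (lex_lt rM rL).
Proof.
move=> [irrM [transM totM]] [irrL [transL totL]]; split; [|split].
- by move=> [m l] [H|[_ H]]; [apply: irrM H | apply: irrL H].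
- move=> [m1 l1] [m2 l2] [m3 l3] [H1|[/= -> H1]] [H2|[/= E2 H2]].
  + by left; apply: transM H1 H2.
  + by left; rewrite -E2.
  + by left.
  + by right; split => //; apply: transL H1 H2.
- move=> [m1 l1] [m2 l2]; case: (totM m1 m2) => [H|[E|H]].
  + by left; left.
  + case: (totL l1 l2) => [H'|[E'|H']]; first by left; right.
      by right; left; rewrite E E'.
    by right; right; right.
  + by right; right; left.
Qed.

Section LexProduct.
Context {M L : Type} {rM : M -> M -> Prop} {rL : L -> L -> Prop}.
Hypotheses (linM : linear rM) (linL : linear rL).
Hypotheses (lcM : locally_countable rM) (lcL : locally_countable rL).

Local Notation lex := (lex_lt rM rL).

Lemma le_of_lex_fst {p q} : le_of lex p q -> le_of rM p.1 q.1.
Proof. by case=> [[H|[E _]]|->]; [left|right|right]. Qed.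

Lemma closed_between_lex_fst {p q z} :
  closed_between lex p q z -> closed_between rM p.1 q.1 z.1.
Proof. by case=> -[H1 H2]; [left|right]; split; apply: le_of_lex_fst. Qed.

Lemma le_of_lex_snd m {a b} : le_of rL a b -> le_of lex (m, a) (m, b).
Proof. by case=> [H|->]; [left; right|right]. Qed.

Lemma le_of_lex_same {m a b} : le_of lex (m, a) (m, b) -> le_of rL a b.
Proof. by case=> [[H|[_ H]]|[->]]; [case: (linM.1 m H)|left|right]. Qed.

Lemma csim_lex_same_fst m a b : csim lex (m, a) (m, b).
Proof.
have fst_m z : closed_between lex (m, a) (m, b) z -> z.1 = m.
  by move/closed_between_lex_fst/(closed_between_same linM).
apply: (countable_preimage snd (lcL a b)).
- move=> [zm zl] Hz; have /= Ez := fst_m _ Hz; subst zm.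
  by case: Hz => -[H1 H2]; [left|right]; split; apply: (le_of_lex_same (m := m)).
- move=> z z' Hz Hz' Ez; apply: injective_projections => //.
  by rewrite (fst_m _ Hz) (fst_m _ Hz').
Qed.

(* The interval contains the final segment of the copy over m1 above l1 and the
   initial segment of the copy over m2 below l2; with [l2, l1] these cover L. *)
Lemma countable_of_csim_lex m1 l1 m2 l2 :
  rM m1 m2 -> csim lex (m1, l1) (m2, l2) -> countable_type L.
Proof.
move=> Hm Hc.
have copy_countable m :
    countable_set (fun l => closed_between lex (m1, l1) (m2, l2) (m, l)).
  by apply: (countable_preimage (fun l => (m, l)) Hc) => // a b _ _ [].
apply: (countable_sub (countable_union (copy_countable m1)
          (countable_union (copy_countable m2) (lcL l2 l1)))) => l _.
case: (le_of_total linL l1 l) => H1.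
  by left; left; split; [apply: le_of_lex_snd | left; left].
case: (le_of_total linL l l2) => H2; last by right; right; left.
by right; left; left; split; [left; left | apply: le_of_lex_snd].
Qed.

Lemma csim_lex_of_countable p q : countable_type L -> csim lex p q.
Proof.
move=> cntL; apply: countable_sub (countable_prod (lcM p.1 q.1) cntL) _.
by move=> z /closed_between_lex_fst.
Qed.

Lemma csim_lex p q : csim lex p q <-> p.1 = q.1 \/ countable_type L.
Proof.
case: p q => [m1 l1] [m2 l2]; split => /=.
- move=> Hc; case: (classic (m1 = m2)) => E; [by left | right].
  case: (linM.2.2 m1 m2) => [H|[//|H]]; first exact: countable_of_csim_lex H Hc.
  exact: countable_of_csim_lex H (csim_sym Hc).
- by case=> [->|cntL]; [apply: csim_lex_same_fst | apply: csim_lex_of_countable].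
Qed.

Lemma apart_lex p q : apart_lt lex p q <-> rM p.1 q.1 /\ ~ countable_type L.
Proof.
rewrite /apart_lt csim_lex; split.
- case=> -[H|[E _]] Hn; last by case: Hn; left.
  by split => // cntL; apply: Hn; right.
- case=> H cntL; split; first by left.
  by case=> [E|//]; rewrite E in H; apply: linM.1 H.
Qed.

Lemma comega_lt_iff C D :
  comega_lt rM rL C D <-> rM (cond_rep C).1 (cond_rep D).1 /\ ~ countable_type L.
Proof.
have linML := lex_linear linM linL.
by rewrite /comega_lt (cond_lt_apart linML (cond_rep_mem linML C) (cond_rep_mem linML D))
  apart_lex.
Qed.

Lemma cond_rep_fst_inj (C D : cond_car lex) : (cond_rep C).1 = (cond_rep D).1 -> C = D.
Proof.
have linML := lex_linear linM linL.
by move=> E; apply: (cond_eq linML (cond_rep_mem linML C) (cond_rep_mem linML D));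
  apply/csim_lex; left.
Qed.

Lemma comega_locally_countable : locally_countable (comega_lt rM rL).
Proof.
move=> C D.
apply: (countable_preimage (fun E => (cond_rep E).1) (lcM (cond_rep C).1 (cond_rep D).1)).
  have le_fst E F : le_of (comega_lt rM rL) E F -> le_of rM (cond_rep E).1 (cond_rep F).1.
    by case=> [/comega_lt_iff [H _]|->]; [left|right].
  by move=> E [] [H1 H2]; [left|right]; split; apply: le_fst.
by move=> E F _ _; apply: cond_rep_fst_inj.
Qed.

Lemma countable_comega :
  countable_type (cond_car lex) <-> countable_type M \/ countable_type L.
Proof.
have linML := lex_linear linM linL.
split.
- move=> cntML; case: (classic (countable_type L)) => cntL; [by right | left].
  case: (uncountable_inhabited cntL) => l0.
  apply: (countable_preimage (fun m => cond_cls (m, l0)) cntML) => // a b _ _ E.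
  have := cond_cls_mem linML (b, l0); rewrite -E => /csim_lex [//|].
  by move/cntL.
- case=> cnt.
    by apply: (countable_preimage (fun E => (cond_rep E).1) cnt) => // E F _ _;
      apply: cond_rep_fst_inj.
  exists (fun _ => 0) => C D _ _ _.
  apply: (cond_eq linML (cond_rep_mem linML C) (cond_rep_mem linML D)).
  exact: csim_lex_of_countable.
Qed.

End LexProduct.

Lemma comega_embeds {M L T : Type} {rM : M -> M -> Prop} {rL : L -> L -> Prop}
    {rT : T -> T -> Prop} (t0 : T) :
  linear rM -> linear rL -> locally_countable rM -> locally_countable rL ->
  (forall t, ~ rT t t) -> embeds rM rT -> embeds (comega_lt rM rL) rT.
Proof.
move=> linM linL lcM lcL irrT [f f_emb].
case: (classic (countable_type L)) => cntL.
  exists (fun _ => t0) => C D; rewrite comega_lt_iff //.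
  by split=> [[_ []] // | /irrT].
exists (fun C => f (cond_rep C).1) => C D.
by rewrite comega_lt_iff // -f_emb; split=> [[]|].
Qed.

Lemma comega_assoc {M L K : Type}
    {rM : M -> M -> Prop} {rL : L -> L -> Prop} {rK : K -> K -> Prop} :
  linear rM -> linear rL -> linear rK ->
  locally_countable rM -> locally_countable rL -> locally_countable rK ->
  order_iso (comega_lt (comega_lt rM rL) rK) (comega_lt rM (comega_lt rL rK)).
Proof.
move=> linM linL linK lcM lcL lcK.
have linA : linear (comega_lt rM rL) := cond_linear (lex_linear linM linL).
have linB : linear (comega_lt rL rK) := cond_linear (lex_linear linL linK).
have lcA : locally_countable (comega_lt rM rL) by apply: comega_locally_countable.
have lcB : locally_countable (comega_lt rL rK) by apply: comega_locally_countable.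
have cntB : countable_type (cond_car (lex_lt rL rK)) <->
            countable_type L \/ countable_type K by apply: countable_comega.
(* ([m, l], k) is sent to (m, [l, k]). *)
apply: (order_iso_cond _ _
  (fun x => ((cond_rep x.1).1, cond_cls ((cond_rep x.1).2, x.2)))
  (lex_linear linA linK) (lex_linear linM linB)).
- move=> [m D]; exists (cond_cls (m, (cond_rep D).1), (cond_rep D).2).
  apply/(csim_lex linM linB lcM lcB) => /=.
  have linML := lex_linear linM linL.
  have := cond_mem_csim linML (cond_rep_mem linML _)
            (cond_cls_mem linML (m, (cond_rep D).1)).
  by case/(csim_lex linM linL lcM lcL) => [->|cntL]; [left | right; apply/cntB; left].
- move=> x y; rewrite (apart_lex linA linK lcA lcK) (apart_lex linM linB lcM lcB).
  rewrite (comega_lt_iff linM linL lcM lcL) /= cntB.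
  by tauto.
Qed.

Lemma locally_countable_embeds {S T : Type} {rS : S -> S -> Prop} {rT : T -> T -> Prop} :
  linear rS -> (forall t, ~ rT t t) -> locally_countable rT -> embeds rS rT ->
  locally_countable rS.
Proof.
move=> [_ [_ totS]] irrT lcT [f f_emb] x y.
have f_inj a b : f a = f b -> a = b.
  move=> E; case: (totS a b) => [H|[//|H]].
  - by move/f_emb: H; rewrite E => /irrT.
  - by move/f_emb: H; rewrite E => /irrT.
have f_le a b : le_of rS a b -> le_of rT (f a) (f b).
  by case=> [/f_emb|->]; [left|right].
apply: (countable_preimage f (lcT (f x) (f y))) => [z|a b _ _ /f_inj //].
by case=> -[H1 H2]; [left|right]; split; apply: f_le.
Qed.

Section LocallyCountableU.
Context {W : Type} {wlt : W -> W -> Prop}.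
Hypothesis linW : linear wlt.

Definition U_below (w : W) (u : U_car W) : Prop :=
  match u with
  | inl p | inr (inr p) => le_of wlt p.1 w
  | inr (inl _) => True
  end.

Lemma U_below_countable w :
  (forall v, countable_set (fun v' => wlt v' v)) -> countable_set (U_below w).
Proof.
move=> segW.
have cnt_R : countable_set (fun p : R_car W => le_of wlt p.1 w /\ True).
  exact: (countable_prod (countable_union (segW w) (countable_set1 w))
                         (countable_countType _ (fun _ : option rat => True))).
have cnt_Q : countable_set (fun _ : rat => True) by apply: countable_countType.
by apply: (countable_sub (countable_sum cnt_R (countable_sum cnt_Q cnt_R))) => -[p|[q|p]].
Qed.

Lemma U_below_mono w w' u : le_of wlt w w' -> U_below w u -> U_below w' u.
Proof.
by move=> Hww'; case: u => [p|[q|p]] //= Hp; apply: (le_of_trans linW Hp Hww').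
Qed.

Lemma U_below_convex w x y z : U_below w x -> U_below w y ->
  le_of (U_lt wlt) x z -> le_of (U_lt wlt) z y -> U_below w z.
Proof.
move=> Hx Hy Hxz Hzy; case: z Hxz Hzy => [p|[q|p]] Hxz Hzy //=.
- case: Hxz => [Hlt|Ex]; last by subst x.
  case: x Hx Hlt => [p'|[q'|p']] //= Hx Hlt.
  exact: (le_of_trans linW (le_of_lex_fst (or_introl Hlt)) Hx).
- case: Hzy => [Hlt|Ey]; last by subst y.
  case: y Hy Hlt => [p'|[q'|p']] //= Hy Hlt.
  exact: (le_of_trans linW (le_of_lex_fst (or_introl Hlt)) Hy).
Qed.

Lemma U_locally_countable : is_omega1 W wlt -> locally_countable (U_lt wlt).
Proof.
move=> [_ [_ [uncW segW]]] x y.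
case: (uncountable_inhabited uncW) => w0.
have below_some u : exists w, U_below w u.
  by case: u => [[v o]|[q|[v o]]]; [exists v; right | exists w0 | exists v; right].
have [w [Hx Hy]] : exists w, U_below w x /\ U_below w y.
  case: (below_some x) (below_some y) => wx Hx [wy Hy].
  case: (le_of_total linW wx wy) => Hw.
    by exists wy; split => //; apply: U_below_mono Hw Hx.
  by exists wx; split => //; apply: U_below_mono Hw Hy.
apply: (countable_sub (U_below_countable w segW)) => z [] [H1 H2].
  exact: U_below_convex Hx Hy H1 H2.
exact: U_below_convex Hy Hx H1 H2.
Qed.

End LocallyCountableU.

Lemma rat_lt_irrefl (a : rat) : ~ rat_lt a a.
Proof. by rewrite /rat_lt Order.POrderTheory.ltxx. Qed.

Lemma U_irreflexive {W : Type} {wlt : W -> W -> Prop} :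
  (forall w, ~ wlt w w) -> forall u, ~ U_lt wlt u u.
Proof.
have irrR (p : R_car W) : (forall w, ~ wlt w w) -> ~ R_lt wlt p p.
  by move=> irrW [/irrW|[_]] //; case: p.2 => [a|] //; apply: rat_lt_irrefl.
by move=> irrW [p|[q|p]]; [apply: irrR | apply: rat_lt_irrefl | apply: irrR].
Qed.

Theorem theorem5p4 :
  forall (W : Type) (wlt : W -> W -> Prop), is_omega1 W wlt ->
  (forall (M : Type) (rM : M -> M -> Prop) (L : Type) (rL : L -> L -> Prop),
     linear rM -> linear rL -> embeds rM (U_lt wlt) -> embeds rL (U_lt wlt) ->
     embeds (comega_lt rM rL) (U_lt wlt)) /\
  (forall (M : Type) (rM : M -> M -> Prop) (L : Type) (rL : L -> L -> Prop)
          (K : Type) (rK : K -> K -> Prop),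
     linear rM -> linear rL -> linear rK ->
     embeds rM (U_lt wlt) -> embeds rL (U_lt wlt) -> embeds rK (U_lt wlt) ->
     order_iso (comega_lt (comega_lt rM rL) rK) (comega_lt rM (comega_lt rL rK))).
Proof.
move=> W wlt omega1W.
have irrU : forall u, ~ U_lt wlt u u by apply: U_irreflexive; case: omega1W => -[].
have lcU := U_locally_countable omega1W.1 omega1W.
have lc_of X (rX : X -> X -> Prop) :
    linear rX -> embeds rX (U_lt wlt) -> locally_countable rX.
  by move=> linX; apply: locally_countable_embeds linX irrU lcU.
split.
- move=> M rM L rL linM linL eM eL.
  by apply: (comega_embeds (inr (inl 0%R))) => //; apply: lc_of.
- move=> M rM L rL K rK linM linL linK eM eL eK.
  by apply: comega_assoc => //; apply: lc_of.
Qed.
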